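(* Let $G=(V,E)$ be a directed graph with edge weights $\omega:E\to\mathbb{R}^{\geq 0}$, let $s,t\in V$ and $k\geq 1$. Let $G'$ be obtained from $G$ by replacing every edge $e$ by $k$ parallel copies $e_1,\dots,e_k$, each of weight $\omega(e)$. Consider solutions consisting of $k$ pairwise edge-disjoint $s\leadsto t$ paths $\mathcal{F}=\{F_1,\dots,F_k\}$ in $G'$ and one $t\leadsto s$ path $B$ in $G'$, with cost equal to the total weight of the set of edges of $G'$ used by $F_1,\dots,F_k,B$. Then there exists an optimum (minimum cost) solution $(\mathcal{F},B)$ that is reverse-compatible.
   Context: For an $s\leadsto t$ path $F$ and a $t\leadsto s$ path $B$, let $P_1,\dots,P_d$ be the maximal sub-paths shared by $F$ and $B$, indexed so that $P_j$ is the $j$-th such sub-path encountered while traversing $F$. The pair $(F,B)$ is path-reverse-compatible if for every $j\in[d]$, $P_j$ is the $(d-j+1)$-th of these sub-paths encountered while traversing $B$. A pair $(\mathcal{F},B)$ with $\mathcal{F}=\{F_1,\dots,F_r\}$ a set of $s\leadsto t$ paths is reverse-compatible if $(F_i,B)$ is path-reverse-compatible for every $i$. (This edge-copy setting models the 2-SCSS-$(k,1)$ problem, in which one seeks $k$ paths $s\leadsto t$ and one path $t\leadsto s$ minimizing $\sum_e\omega(e)\max\{\#\{i: e\in F_i\},\ \#\{B\ni e\}\}$.) *)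

From HB Require Import structures.
From mathcomp Require Import all_boot all_order all_algebra.
Set Implicit Arguments. Unset Strict Implicit. Unset Printing Implicit Defensive.
Import Order.TTheory GRing.Theory Num.Theory.

(* A directed (multi)graph: vertex type V, edge type E, each edge e goes
   from tl e to hd e.  The k-copy graph G' has edge type (E * 'I_k):
   the pair (e, i) is the (i+1)-th parallel copy of e. *)
Section Defs.
Variables (V E : finType) (tl hd : E -> V) (k : nat).

Definition E' := (E * 'I_k)%type.
Definition tl' (x : E') : V := tl x.1.
Definition hd' (x : E') : V := hd x.1.

Fixpoint walk' (u v : V) (es : seq E') : bool :=
  match es with
  | [::] => u == v
  | e :: es' => (tl' e == u) && walk' (hd' e) v es'
  end.

Definition is_path (u v : V) (es : seq E') : bool :=
  walk' u v es && uniq (u :: map hd' es).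

(* Maximal runs (contiguous blocks) of elements of s satisfying p,
   listed in the order of s. *)
Fixpoint runs_aux (T : Type) (p : pred T) (cur : seq T) (s : seq T) : seq (seq T) :=
  match s with
  | [::] => if cur is [::] then [::] else [:: rev cur]
  | x :: s' =>
      if p x then runs_aux p (x :: cur) s'
      else if cur is [::] then runs_aux p [::] s'
           else rev cur :: runs_aux p [::] s'
  end.
Definition runs (T : Type) (p : pred T) (s : seq T) := runs_aux p [::] s.

(* The maximal sub-paths shared by F and B, in the order met while
   traversing F (resp. B). *)
Definition shared_in_F (F B : seq E') : seq (seq E') := runs (mem B) F.
Definition shared_in_B (F B : seq E') : seq (seq E') := runs (mem F) B.

Definition path_rev_compat (F B : seq E') : Prop :=
  let PF := shared_in_F F B in
  let PB := shared_in_B F B in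
  size PF = size PB /\
  forall j, j < size PF -> nth [::] PF j = nth [::] PB (size PF - j.+1).

Definition rev_compat (Fs : 'I_k -> seq E') (B : seq E') : Prop :=
  forall i, path_rev_compat (Fs i) B.

Definition feasible (s t : V) (Fs : 'I_k -> seq E') (B : seq E') : Prop :=
  [/\ forall i, is_path s t (Fs i),
      forall i j, i != j -> forall e, e \in Fs i -> e \notin Fs j
    & is_path t s B].

Definition cost (R : nmodType) (w : E -> R) (Fs : 'I_k -> seq E') (B : seq E') : R :=
  (\sum_(x : E' | [exists i, x \in Fs i] || (x \in B)) w x.1)%R.

End Defs.

From mathcomp Require Import all_boot all_order all_algebra zify.
From Stdlib Require Import FunctionalExtensionality.
Set Implicit Arguments. Unset Strict Implicit. Unset Printing Implicit Defensive.
Import Order.TTheory GRing.Theory Num.Theory.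

(* Take an optimum solution (there is one: paths have fewer than |V| edges, so
   there are finitely many solutions) and keep its forward paths F_i.  Whenever
   the back path B meets two edges x, y of some F_i in the order of F_i but does
   not follow F_i from x to y, replace that piece of B by the piece of F_i and
   shortcut the resulting walk to a path.  All edges used were already used, so
   the cost does not grow, while the number of changes of owner (the index of
   the F_i containing an edge) along B drops.  When no repair applies, B agrees
   with each F_i between any two shared edges met in the order of F_i.  Since in
   a path "y comes right after x" just means hd x = tl y, consecutive shared
   edges are consecutive along both paths; together, these facts force the
   maximal shared sub-paths to occur along B in the reverse order. *)

Section Switches.
Variable T : eqType.
Implicit Types (x y z h : T) (s p q m : seq T).

Fixpoint nswitch s : nat :=
  if s is x :: s' then (if s' is y :: _ then (x != y) + nswitch s' else 0) else 0.

Lemma nswitch_cons2 x y s : nswitch [:: x, y & s] = (x != y) + nswitch (y :: s).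
Proof. by []. Qed.

Lemma nswitch_cat p x q : nswitch (p ++ x :: q) = nswitch (rcons p x) + nswitch (x :: q).
Proof.
elim: p => [|y p IH] //=.
by case: p IH => [|z p] /= IH; rewrite ?addn0 // IH addnA.
Qed.

Lemma nswitch_rcons2 p x y : nswitch (rcons (rcons p x) y) = nswitch (rcons p x) + (x != y).
Proof.
have -> : rcons (rcons p x) y = p ++ [:: x; y] by rewrite -!cats1 -catA.
by rewrite nswitch_cat /= addn0.
Qed.

Lemma nswitch_eq0 h s : (nswitch (h :: s) == 0) = all (pred1 h) s.
Proof.
elim: s h => [|y s IH] h //.
by rewrite nswitch_cons2 addn_eq0 eqb0 negbK IH /= eq_sym; case: eqP => [->|].
Qed.

Lemma neq_le_add x y z : (x != z) <= (x != y) + (y != z).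
Proof. by case: (x =P y) => [<-|]; case: (x != z). Qed.

Lemma nswitch_last h s : (h != last h s) <= nswitch (h :: s).
Proof.
elim: s h => [|y s IH] h /=; first by rewrite eqxx.
by rewrite (leq_trans (neq_le_add h y _)) // leq_add2l IH.
Qed.

Lemma nswitch_remove_infix p m q : nswitch (p ++ q) <= nswitch (p ++ m ++ q).
Proof.
case: m => [|h m] //; case/lastP: p => [|p x]; case: q => [|y q].
- by [].
- by rewrite !cat0s nswitch_cat leq_addl.
- by rewrite !cats0 nswitch_cat nswitch_rcons2 -addnA leq_addr.
rewrite nswitch_cat nswitch_rcons2 cat_cons nswitch_cat nswitch_rcons2 -cat_cons.
rewrite nswitch_cat -!addnA leq_add2l addnA leq_add2r.
rewrite (leq_trans (neq_le_add x h y)) // leq_add2l.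
by have := nswitch_last h (rcons m y); rewrite last_rcons rcons_cons.
Qed.

Lemma nswitch_loop_cat h m q :
  last h m = h -> nswitch (h :: m ++ q) = nswitch (h :: m) + nswitch (h :: q).
Proof.
move=> lh; case: q => [|y q]; first by rewrite cats0 addn0.
rewrite -cat_cons nswitch_cat nswitch_cons2 addnA; congr (_ + _).
have -> : h :: m = rcons (belast h m) h by rewrite lastI lh.
by rewrite nswitch_rcons2.
Qed.

Lemma nswitch_replace_loop p q m1 m2 h : last h m1 = h -> last h m2 = h ->
  nswitch (h :: m2) < nswitch (h :: m1) ->
  nswitch (p ++ h :: m2 ++ q) < nswitch (p ++ h :: m1 ++ q).
Proof.
by move=> l1 l2 lt; rewrite !nswitch_cat !nswitch_loop_cat // ltn_add2l ltn_add2r.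
Qed.

End Switches.

Section Runs.
Variable T : eqType.
Implicit Types (p : pred T) (x y : T) (s c cur X : seq T).

Lemma runs_eq_in p1 p2 cur s : {in s, p1 =1 p2} -> runs_aux p1 cur s = runs_aux p2 cur s.
Proof.
elim: s cur => [|x s IH] cur //= eq12.
have eq12s : {in s, p1 =1 p2} by move=> y ys; apply: eq12; rewrite inE ys orbT.
by rewrite eq12 ?mem_head //; case: (p2 x); rewrite IH.
Qed.

Lemma runs_skip p c s : all (predC p) c -> runs_aux p [::] (c ++ s) = runs_aux p [::] s.
Proof. by elim: c => [|x c IH] //= /andP[/negbTE -> /IH]. Qed.

Lemma runs_take p cur X s : all p X -> runs_aux p cur (X ++ s) = runs_aux p (catrev X cur) s.
Proof. by elim: X cur => [|x X IH] cur //= /andP[-> /IH]. Qed.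

Lemma runs_rcons_cat p cur s1 x s2 : ~~ p x ->
  runs_aux p cur (rcons s1 x ++ s2) = runs_aux p cur (rcons s1 x) ++ runs p s2.
Proof.
move=> px; elim: s1 cur => [|y s1 IH] cur /=; first by rewrite (negbTE px); case: cur.
by case: (p y) => //; case: cur => [|z cur]; rewrite IH.
Qed.

Lemma runs_nil p s : all (predC p) s -> runs p s = [::].
Proof. by move=> ps; rewrite /runs -[s]cats0 runs_skip. Qed.

Lemma runs_flush p cur s : cur != [::] -> ~~ has p (take 1 s) ->
  runs_aux p cur s = rev cur :: runs p s.
Proof.
case: cur => // x cur _; case: s => [|y s] //=.
by rewrite take0 orbF /runs /= => /negbTE ->.
Qed.

Lemma runs_front p c X s : all (predC p) c -> all p X -> X != [::] ->
  ~~ has p (take 1 s) -> runs p (c ++ X ++ s) = X :: runs p s.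
Proof.
move=> pc pX X0 ps; rewrite /runs runs_skip // runs_take // catrevE cats0.
by rewrite runs_flush ?revK // -size_eq0 size_rev size_eq0.
Qed.

Lemma runs_back p s X c : all (predC p) c -> all p X -> X != [::] ->
  (forall s' x, s = rcons s' x -> ~~ p x) -> runs p (s ++ X ++ c) = rcons (runs p s) X.
Proof.
move=> pc pX X0 ps.
have pc1 : ~~ has p (take 1 c) by case: c pc => //= y c; rewrite take0 orbF => /andP[].
have eXc : runs p (X ++ c) = [:: X] by rewrite -[X ++ c]cat0s runs_front ?runs_nil.
case/lastP: s ps => [|s x] ps; first by rewrite cat0s eXc.
by rewrite {1}/runs runs_rcons_cat ?(ps s x) // eXc cats1.
Qed.

Lemma split_prefix p s : exists X s', [/\ s = X ++ s', all p X & ~~ has p (take 1 s')].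
Proof.
elim: s => [|x s [X [s' [-> pX ps']]]]; first by exists [::], [::].
case px: (p x); first by exists (x :: X), s'; rewrite /= px.
by exists [::], (x :: X ++ s'); rewrite /= take0 px.
Qed.

Lemma runs_split p s : has p s -> exists c X s',
  [/\ s = c ++ X ++ s', all (predC p) c, all p X, X != [::] & ~~ has p (take 1 s')].
Proof.
elim: s => [|x s IH] //=; case px: (p x) => /= ps.
  have [X [s' [-> pX ps']]] := split_prefix p s.
  by exists [::], (x :: X), s'; rewrite /= px.
have [c [X [s' [-> pc pX X0 ps']]]] := IH ps.
by exists (x :: c), X, s'; rewrite /= px.
Qed.

End Runs.

Section Slices.
Variable T : eqType.
Implicit Types (x y z : T) (s p q X F B : seq T).

Definition succ_in s x y := (y \in s) && (index y s == (index x s).+1).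

Definition slice s x y := take (index y s - index x s).+1 (drop (index x s) s).

Lemma index_cat_notin x p q : x \notin p -> index x (p ++ q) = size p + index x q.
Proof. by move=> xp; rewrite index_cat (negbTE xp). Qed.

Lemma index_uniq_cat p x q : uniq (p ++ x :: q) -> index x (p ++ x :: q) = size p.
Proof.
by rewrite cat_uniq /= => /and3P[_ /norP[xp _] _]; rewrite index_cat_notin //= eqxx addn0.
Qed.

Lemma succ_in_catl p q x y : x \in p -> y \in p -> succ_in (p ++ q) x y = succ_in p x y.
Proof. by move=> xp yp; rewrite /succ_in mem_cat yp !index_cat xp yp. Qed.

Lemma succ_in_catr p q x y : x \notin p -> y \notin p -> succ_in (p ++ q) x y = succ_in q x y.
Proof.
by move=> xp yp; rewrite /succ_in mem_cat (negbTE yp) !index_cat_notin // -addnS eqn_add2l.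
Qed.

Lemma succ_path_cat p x X q : uniq (p ++ x :: X ++ q) -> path (succ_in (p ++ x :: X ++ q)) x X.
Proof.
elim: X p x => [|y X IH] p x //= u.
have u' : uniq (rcons p x ++ y :: X ++ q) by rewrite cat_rcons.
rewrite -cat_rcons IH // andbT /succ_in mem_cat mem_head orbT /=.
by rewrite index_uniq_cat // size_rcons cat_rcons index_uniq_cat.
Qed.

Lemma succ_path_take_drop s x X : x \in s -> path (succ_in s) x X ->
  take (size X) (drop (index x s).+1 s) = X.
Proof.
elim: X x => [|y X IH] x xs /=; first by rewrite take0.
case/andP => /andP[ys /eqP <-] pX.
by rewrite (drop_nth y) ?index_mem // nth_index //= IH.
Qed.

Lemma index_last_succ_path s x X : path (succ_in s) x X ->
  index (last x X) s = index x s + size X.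
Proof.
elim: X x => [|y X IH] x /=; first by rewrite addn0.
by case/andP => /andP[_ /eqP iy] /IH ->; rewrite iy addSnnS.
Qed.

Lemma slice_cons s x y : x \in s ->
  slice s x y = x :: take (index y s - index x s) (drop (index x s).+1 s).
Proof. by move=> xs; rewrite /slice (drop_nth x) ?index_mem // nth_index. Qed.

Lemma last_take_drop s x i n : i + n < size s ->
  last (nth x s i) (take n (drop i.+1 s)) = nth x s (i + n).
Proof.
case: n => [|n] lt; first by rewrite addn0 take0.
rewrite -nth_last size_takel ?size_drop; last by lia.
by rewrite /= nth_take // nth_drop addSnnS; apply: set_nth_default.
Qed.

Lemma last_slice s x y : x \in s -> y \in s -> index x s <= index y s ->
  last x (take (index y s - index x s) (drop (index x s).+1 s)) = y.
Proof.
move=> xs ys le; rewrite -{1}(nth_index x xs) last_take_drop subnKC ?nth_index //.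
by rewrite index_mem.
Qed.

Lemma slice_split s x y : index x s <= index y s ->
  s = take (index x s) s ++ slice s x y ++ drop (index y s).+1 s.
Proof.
move=> le; have -> : (index y s).+1 = (index y s - index x s).+1 + index x s.
  by rewrite addSn subnK.
by rewrite /slice -drop_drop !cat_take_drop.
Qed.

Lemma mem_slice s x y z : z \in s -> index x s <= index z s <= index y s ->
  z \in slice s x y.
Proof.
move=> zs /andP[le1 le2]; rewrite -(nth_index z zs) -(subnKC le1) -nth_drop.
rewrite -(@nth_take (index y s - index x s).+1); last by rewrite ltnS leq_sub2r.
apply: mem_nth; rewrite size_take_min leq_min ltnS leq_sub2r //= size_drop ltn_sub2r //.
  by rewrite (leq_ltn_trans le1) // index_mem.
by rewrite index_mem.
Qed.

Definition succ_agree F B :=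
  {in [predI F & B] &, forall x y, succ_in F x y = succ_in B x y}.

Definition convex_common F B := forall x y z,
  x \in [predI F & B] -> y \in [predI F & B] -> z \in F ->
  index x F < index y F -> index x B < index y B ->
  index x F <= index z F <= index y F -> z \in B.

Definition slices_agree F B := forall x y,
  x \in [predI F & B] -> y \in [predI F & B] ->
  index x F <= index y F -> index x B <= index y B -> slice F x y = slice B x y.

Lemma slices_agree_convex F B : slices_agree F B -> convex_common F B.
Proof.
move=> agree x y z xFB yFB zF ltF ltB zbet.
have /mem_take/mem_drop : z \in slice B x y.
  by rewrite -agree ?(ltnW ltF) ?(ltnW ltB) //; apply: mem_slice.
by [].
Qed.

End Slices.

Section PeelRun.
Variables (T : eqType) (F B c X F2 : seq T) (a : T).
Hypotheses (uF : uniq F) (uB : uniq B) (sFB : succ_agree F B) (cFB : convex_common F B).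
Hypotheses (eF : F = c ++ a :: X ++ F2) (cB : all (predC (mem B)) c).
Hypotheses (aXB : {subset a :: X <= B}) (F2B : ~~ has (mem B) (take 1 F2)).

(* [a :: X] is the first maximal run of [F] inside [B]; it turns out to be the
   last maximal run of [B] inside [F]. *)
Let B1 := take (index a B) B.
Let B2 := drop (index a B + (size X).+1) B.

Lemma run_sub_F : {subset a :: X <= F}.
Proof. by move=> x xaX; rewrite eF mem_cat -cat_cons mem_cat xaX orbT. Qed.

Lemma run_infix : B = B1 ++ a :: X ++ B2.
Proof.
have aB : a \in B by rewrite aXB ?mem_head.
have pB : path (succ_in B) a X.
  apply: (@sub_in_path _ [predI F & B] (succ_in F)).
  - by move=> x y xFB yFB; rewrite sFB.
  - by apply/allP => x xaX; rewrite inE aXB ?run_sub_F.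
  by rewrite eF succ_path_cat // -eF.
rewrite /B1 /B2 -{1}(cat_take_drop (index a B) B) (drop_nth a) ?index_mem // nth_index //.
rewrite -{1}(cat_take_drop (size X) (drop (index a B).+1 B)) (succ_path_take_drop aB pB).
by rewrite drop_drop addnC addSnnS.
Qed.

Lemma F2_sub_F : {subset F2 <= F}.
Proof. by move=> w wF2; rewrite eF -cat_cons catA mem_cat wF2 orbT. Qed.

Lemma index_run_head : index a F = size c /\ index a B = size B1.
Proof.
have uB' := uB; rewrite run_infix in uB'.
by rewrite {1}run_infix index_uniq_cat // eF index_uniq_cat // -eF.
Qed.

Lemma index_F2 w : w \in F2 ->
  w \notin c ++ a :: X /\ index w F = size (c ++ a :: X) + index w F2.
Proof.
move=> wF2; have : uniq ((c ++ a :: X) ++ F2) by rewrite -catA -eF.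
rewrite cat_uniq => /and3P[_ /hasPn/(_ w wF2) wn _].
by rewrite eF -cat_cons catA index_cat_notin.
Qed.

Lemma index_B2 w : w \in B2 ->
  w \notin B1 ++ a :: X /\ index w B = size (B1 ++ a :: X) + index w B2.
Proof.
move=> wB2; have : uniq ((B1 ++ a :: X) ++ B2) by rewrite -catA -run_infix.
rewrite cat_uniq => /and3P[_ /hasPn/(_ w wB2) wn _].
by rewrite {1}run_infix -cat_cons catA index_cat_notin.
Qed.

Lemma B2_notin_F : all (predC (mem F)) B2.
Proof.
apply/allP => y yB2; apply/negP => /= yF.
have [yn iyB] := index_B2 yB2.
have yB : y \in B by rewrite run_infix -cat_cons catA mem_cat yB2 orbT.
have yF2 : y \in F2.
  move: yF; rewrite eF mem_cat -cat_cons mem_cat => /or3P[yc|yaX|//].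
    by have := allP cB y yc; rewrite /= yB.
  by move: yn; rewrite mem_cat yaX orbT.
have [yn' iyF] := index_F2 yF2.
case eF2 : F2 F2B => [|z F3] /=; first by rewrite eF2 in yF2.
rewrite take0 orbF => /negP; apply.
have zF2 : z \in F2 by rewrite eF2 mem_head.
have [_ izF] := index_F2 zF2.
have [iaF iaB] := index_run_head.
apply: (cFB (x := a) (y := y)).
- by rewrite inE run_sub_F ?mem_head // aXB ?mem_head.
- by rewrite inE yF yB.
- exact: F2_sub_F.
- by rewrite iaF iyF size_cat /=; lia.
- by rewrite iaB iyB size_cat /=; lia.
by rewrite iaF izF iyF eF2 /= eqxx size_cat /=; lia.
Qed.

Lemma last_B1_notin_F B0 x : B1 = rcons B0 x -> ~~ mem F x.
Proof.
move=> eB1; apply/negP => /= xF.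
have eB : B = B0 ++ x :: a :: X ++ B2 by rewrite {1}run_infix eB1 cat_rcons.
have xB : x \in B by rewrite eB mem_cat mem_head orbT.
have [iaF iaB] := index_run_head.
have aFB : a \in [predI F & B] by rewrite inE run_sub_F ?aXB ?mem_head.
have : succ_in B x a.
  have uB' : uniq (B0 ++ x :: a :: X ++ B2) by rewrite -eB.
  by rewrite /succ_in aXB ?mem_head // iaB eB1 size_rcons eB index_uniq_cat //=.
rewrite -sFB ?inE ?xF ?xB // => /andP[_ /eqP iaF'].
have : x \in take (size c) F by rewrite in_take // -iaF iaF'.
rewrite eF take_size_cat // => xc.
by have := allP cB x xc; rewrite /= xB.
Qed.

Lemma index_B1 w : w \in B1 -> w \notin a :: X ++ B2 /\ index w B = index w B1.
Proof.
move=> wB1; have := uB; rewrite run_infix cat_uniq => /and3P[_ /hasPn wn _].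
split; last by rewrite index_cat wB1.
by apply/negP => /wn; rewrite wB1.
Qed.

Lemma mem_B_F2 w : w \in F2 -> (w \in B) = (w \in B1).
Proof.
move=> wF2; have [+ _] := index_F2 wF2; rewrite mem_cat negb_or => /andP[_ wnX].
have wF := F2_sub_F wF2.
have wnB2 : w \notin B2 by apply: contraL wF => /(allP B2_notin_F).
by rewrite {1}run_infix mem_cat -cat_cons mem_cat (negbTE wnX) (negbTE wnB2) !orbF.
Qed.

Lemma mem_F_B1 w : w \in B1 -> (w \in F) = (w \in F2).
Proof.
move=> wB1; have [wn _] := index_B1 wB1.
have wB : w \in B by rewrite run_infix mem_cat wB1.
rewrite eF -cat_cons catA !mem_cat.
have -> : (w \in c) = false by apply/negP => /(allP cB); rewrite /= wB.
by have -> : (w \in a :: X) = false by apply/negP => wX; move: wn; rewrite -cat_cons mem_cat wX.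
Qed.

Lemma runs_peelF : runs (mem B) F = (a :: X) :: runs (mem B1) F2.
Proof.
rewrite {1}eF -cat_cons runs_front //; last by apply/allP => w /aXB.
by congr (_ :: _); apply: runs_eq_in => w /mem_B_F2.
Qed.

Lemma runs_peelB : runs (mem F) B = rcons (runs (mem F2) B1) (a :: X).
Proof.
rewrite {1}run_infix -cat_cons runs_back ?B2_notin_F //.
- by congr rcons; apply: runs_eq_in => w /mem_F_B1.
- by apply/allP => w wX; rewrite /= run_sub_F.
exact: last_B1_notin_F.
Qed.

Lemma peel_succ_agree : succ_agree F2 B1.
Proof.
move=> x y /andP[/= xF2 xB1] /andP[/= yF2 yB1].
have [[xn _] [yn _]] := (index_F2 xF2, index_F2 yF2).
rewrite -(succ_in_catr F2 xn yn) -catA cat_cons -eF.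
rewrite -(succ_in_catl (a :: X ++ B2) xB1 yB1) -run_infix.
by apply: sFB; rewrite inE ?mem_B_F2 ?mem_F_B1 ?xF2 ?xB1 ?yF2 ?yB1.
Qed.

Lemma peel_convex : convex_common F2 B1.
Proof.
move=> x y z /andP[/= xF2 xB1] /andP[/= yF2 yB1] zF2 ltF ltB bet.
rewrite -mem_B_F2 //; apply: (cFB (x := x) (y := y)).
- by rewrite inE mem_B_F2 ?mem_F_B1 ?xF2.
- by rewrite inE mem_B_F2 ?mem_F_B1 ?yF2.
- exact: F2_sub_F.
all: rewrite ?(index_F2 xF2).2 ?(index_F2 yF2).2 ?(index_F2 zF2).2.
all: rewrite ?(index_B1 xB1).2 ?(index_B1 yB1).2 ?ltn_add2l ?leq_add2l //.
Qed.

Lemma runs_peel : [/\ runs (mem B) F = (a :: X) :: runs (mem B1) F2,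
  runs (mem F) B = rcons (runs (mem F2) B1) (a :: X),
  succ_agree F2 B1 & convex_common F2 B1].
Proof.
by split; [apply: runs_peelF | apply: runs_peelB | apply: peel_succ_agree | apply: peel_convex].
Qed.

End PeelRun.

Lemma runs_rev (T : eqType) (F B : seq T) : uniq F -> uniq B -> succ_agree F B ->
  convex_common F B -> runs (mem B) F = rev (runs (mem F) B).
Proof.
have [m] := ubnP (size F); elim: m F B => // m IH F B /ltnSE szF uF uB sFB cFB.
have [hasFB|nFB] := boolP (has (mem B) F); last first.
  by rewrite !runs_nil // all_predC // has_sym.
have [c [[|a X] [F2 [eF cB aXB X0 F2B]]]] := runs_split hasFB; first by [].
have aXB' : {subset a :: X <= B} by move=> w /(allP aXB).
have [-> -> sFB' cFB'] := runs_peel uF uB sFB cFB eF cB aXB' F2B.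
have uF2 : uniq F2 by move: uF; rewrite eF catA cat_uniq => /and3P[].
rewrite rev_rcons IH ?take_uniq //.
by apply: leq_trans szF; rewrite eF !size_cat /=; lia.
Qed.

Section Walks.
Variables (V E : finType) (tl hd : E -> V) (k : nat).
Local Notation EE := (E' E k).
Local Notation walk := (@walk' V E tl hd k).
Local Notation ipath := (@is_path V E tl hd k).
Local Notation hdE := (@hd' V E hd k).
Local Notation tlE := (@tl' V E tl k).
Implicit Types (u v w : V) (e : EE) (l W F B : seq EE).

Definition vtx u l i := nth u (u :: map hdE l) i.

Lemma vtx_cons u e l i : i <= size l -> vtx u (e :: l) i.+1 = vtx (hdE e) l i.
Proof. by move=> il; rewrite /vtx /= (set_nth_default (hdE e)) // /= size_map ltnS. Qed.

Lemma walk_cat u w v l1 l2 : walk u w l1 -> walk w v l2 -> walk u v (l1 ++ l2).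
Proof.
elim: l1 u => [|e l1 IH] u /=; first by move/eqP->.
by case/andP=> -> /IH H /H.
Qed.

Lemma walk_take u v l i : walk u v l -> i <= size l -> walk u (vtx u l i) (take i l).
Proof.
elim: l u i => [|e l IH] u [|i] //= /andP[/eqP te W] il; rewrite ?eqxx //.
by rewrite te eqxx vtx_cons // IH.
Qed.

Lemma walk_drop u v l i : walk u v l -> i <= size l -> walk (vtx u l i) v (drop i l).
Proof.
elim: l u i => [|e l IH] u [|i] // W il; try by [].
by case/andP: W => _ W; rewrite vtx_cons // IH.
Qed.

Lemma vtx_drop u l i n : i + n <= size l -> vtx (vtx u l i) (drop i l) n = vtx u l (i + n).
Proof.
case: n => [|n] le; first by rewrite addn0.
rewrite addnS /vtx /= map_drop nth_drop; apply: set_nth_default.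
by rewrite size_map -addnS.
Qed.

Lemma walk_take_drop u v l i n : walk u v l -> i + n <= size l ->
  walk (vtx u l i) (vtx u l (i + n)) (take n (drop i l)).
Proof.
move=> W le; rewrite -vtx_drop //; apply: walk_take; first by apply: walk_drop W _; lia.
by rewrite size_drop; lia.
Qed.

Lemma tl_nth u v l i e : walk u v l -> i < size l -> tlE (nth e l i) = vtx u l i.
Proof.
elim: l u i => [|f l IH] u [|i] //= /andP[/eqP te W] il; first by [].
by rewrite (IH _ _ W) // vtx_cons // ltnW.
Qed.

Lemma hd_nth u l i e : i < size l -> hdE (nth e l i) = vtx u l i.+1.
Proof. by move=> il; rewrite /vtx /= (nth_map e). Qed.

Lemma path_uniq u v l : ipath u v l -> uniq l.
Proof. by case/andP=> _ /= /andP[_ /map_uniq]. Qed.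

Lemma path_vtx_inj u v l i j : ipath u v l -> i <= size l -> j <= size l ->
  (vtx u l i == vtx u l j) = (i == j).
Proof. by case/andP=> _ U il jl; rewrite /vtx nth_uniq //= size_map ltnS. Qed.

Lemma succ_in_path u v l x y : ipath u v l -> x \in l -> y \in l ->
  succ_in l x y = (hdE x == tlE y).
Proof.
move=> P xl yl; have W : walk u v l by case/andP: P.
rewrite /succ_in yl -{2}(nth_index x xl) -{2}(nth_index x yl).
rewrite (hd_nth u) ?index_mem // (tl_nth x W) ?index_mem //.
have [ix iy] : index x l < size l /\ index y l < size l by rewrite !index_mem.
by rewrite (path_vtx_inj P ix (ltnW iy)) eq_sym.
Qed.

Lemma walk_adj_path u v e l : walk u v (e :: l) -> path (fun e f => hdE e == tlE f) e l.
Proof.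
elim: l u e => [|f l IH] u e //= /andP[_ /andP[/eqP fe W]].
by rewrite fe eqxx (IH (hdE e)) //= fe eqxx.
Qed.

Lemma walk_to_path (L : eqType) (lab : EE -> L) u v W : walk u v W -> exists P,
  [/\ ipath u v P, {subset P <= W} & nswitch (map lab P) <= nswitch (map lab W)].
Proof.
have [n] := ubnP (size W); elim: n u v W => // n IH u v W /ltnSE szW Wk.
have [uW|] := boolP (uniq (u :: map hdE W)); first by exists W; split => //; apply/andP.
case/(uniqPn u) => i [j [ij jl eij]]; rewrite /= size_map ltnS in jl.
have il : i <= size W by rewrite ltnW // (leq_trans ij).
have W' : walk u v (take i W ++ drop j W).
  by apply: walk_cat (walk_take Wk il) _; rewrite [vtx _ _ _]eij; apply: walk_drop.
have [|P [P1 P2 P3]] := IH _ _ _ _ W'; first by rewrite size_cat size_takel // size_drop; lia.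
exists P; split => //; first by move=> x /P2; rewrite mem_cat => /orP[/mem_take|/mem_drop].
apply: leq_trans P3 _.
have {3}-> : W = take i W ++ drop i (take j W) ++ drop j W.
  by rewrite catA -{1}(take_takel W (ltnW ij)) !cat_take_drop.
by rewrite !map_cat nswitch_remove_infix.
Qed.

Lemma slice_sub_path u v u' v' F B x y : ipath u v F -> ipath u' v' B ->
  x \in B -> y \in B -> index x B <= index y B -> {subset slice B x y <= F} ->
  slice B x y = slice F x y.
Proof.
move=> PF PB xB yB le sub.
set X := take (index y B - index x B) (drop (index x B).+1 B).
have eB : slice B x y = x :: X by apply: slice_cons.
have xF : x \in F by apply: sub; rewrite eB mem_head.
have adj : path (fun e f => hdE e == tlE f) x X.
  have WB : walk u' v' B by case/andP: PB.
  have le' : index x B + (index y B - index x B).+1 <= size B.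
    by rewrite addnS subnKC // index_mem.
  by have := walk_take_drop WB le'; rewrite -/(slice B x y) eB => /walk_adj_path.
have pF : path (succ_in F) x X.
  apply: (@sub_in_path _ (mem F) _ _ _ _ _ _ adj).
  - by move=> e f eF fF /eqP eef; rewrite (succ_in_path PF) // eef.
  by apply/allP => e; rewrite -eB => /sub.
have iyF : index y F = index x F + size X.
  by rewrite -(index_last_succ_path pF) last_slice.
by rewrite eB slice_cons // iyF addKn (succ_path_take_drop xF pF).
Qed.

Lemma slices_path_rev_compat s t F B : ipath s t F -> ipath t s B ->
  slices_agree F B -> path_rev_compat F B.
Proof.
move=> PF PB agree.
have sFB : succ_agree F B.
  by move=> x y /andP[xF xB] /andP[yF yB]; rewrite (succ_in_path PF) // (succ_in_path PB).
have := runs_rev (path_uniq PF) (path_uniq PB) sFB (slices_agree_convex agree).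
rewrite /path_rev_compat /shared_in_F /shared_in_B => ->; rewrite size_rev.
by split=> // j jl; rewrite nth_rev // -(size_rev (runs _ _)).
Qed.

End Walks.

Section Repair.
Variables (V E : finType) (tl hd : E -> V) (k : nat) (s t : V).
Local Notation EE := (E' E k).
Local Notation walk := (@walk' V E tl hd k).
Local Notation ipath := (@is_path V E tl hd k).
Local Notation vtx := (@vtx V E hd k).
Variable Fs : 'I_k -> seq EE.
Hypotheses (PF : forall i, ipath s t (Fs i))
  (disF : forall i j, i != j -> forall e, e \in Fs i -> e \notin Fs j).

Definition owner (e : EE) : option 'I_k := [pick i | e \in Fs i].

Lemma ownerP i e : e \in Fs i -> owner e = Some i.
Proof.
move=> ei; rewrite /owner; case: pickP => [j ej|/(_ i)]; last by rewrite ei.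
by case: (eqVneq i j) => [->//|ij]; have := disF ij ei; rewrite ej.
Qed.

Lemma owner_some i e : owner e = Some i -> e \in Fs i.
Proof. by rewrite /owner; case: pickP => // j ej [<-]. Qed.

Section Reroute.
Variables (B : seq EE) (i : 'I_k) (x y : EE).
Hypotheses (PB : ipath t s B) (xF : x \in Fs i) (yF : y \in Fs i) (xB : x \in B) (yB : y \in B).
Hypotheses (leF : index x (Fs i) <= index y (Fs i)) (leB : index x B <= index y B).
Local Notation F := (Fs i).

Lemma reroute_walk :
  walk t s (take (index x B) B ++ slice F x y ++ drop (index y B).+1 B).
Proof.
have WB : walk t s B by case/andP: PB.
have WF : walk s t F by case/andP: (PF i).
have [ixB iyB] : index x B < size B /\ index y B < size B by rewrite !index_mem.
have [ixF iyF] : index x F < size F /\ index y F < size F by rewrite !index_mem.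
have le' : index x F + (index y F - index x F).+1 <= size F by rewrite addnS subnKC.
have e1 : vtx t B (index x B) = vtx s F (index x F).
  by rewrite -(tl_nth x WB) // -(tl_nth x WF) // !nth_index.
have e2 : vtx s F (index x F + (index y F - index x F).+1) = vtx t B (index y B).+1.
  by rewrite addnS subnKC // -(hd_nth _ _ y iyF) -(hd_nth _ _ y iyB) !nth_index.
apply: walk_cat (walk_take WB (ltnW ixB)) _; rewrite e1.
apply: walk_cat (walk_take_drop WF le') _; rewrite e2.
exact: walk_drop.
Qed.

Hypothesis ne : slice F x y != slice B x y.

Lemma reroute_switches : nswitch (map owner
  (take (index x B) B ++ slice F x y ++ drop (index y B).+1 B)) < nswitch (map owner B).
Proof.
set mB := take (index y B - index x B) (drop (index x B).+1 B).
set mF := take (index y F - index x F) (drop (index x F).+1 F).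
have eB : slice B x y = x :: mB by apply: slice_cons.
have eF : slice F x y = x :: mF by apply: slice_cons.
have lastB : last (Some i) (map owner mB) = Some i.
  by rewrite -(ownerP xF) last_map last_slice // (ownerP xF) (ownerP yF).
have lastF : last (Some i) (map owner mF) = Some i.
  by rewrite -(ownerP xF) last_map last_slice // (ownerP xF) (ownerP yF).
have sw_mF : nswitch (Some i :: map owner mF) = 0.
  apply/eqP; rewrite nswitch_eq0; apply/allP => o /mapP[e emF ->] /=.
  by rewrite (ownerP (mem_drop (mem_take emF))).
have sw_mB : 0 < nswitch (Some i :: map owner mB).
  rewrite lt0n nswitch_eq0; apply: contra ne => /allP own; apply/eqP/esym.
  apply: (slice_sub_path (PF i) PB xB yB leB) => e; rewrite eB inE => /orP[/eqP->//|emB].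
  by apply: owner_some; apply/eqP; apply: own; apply: map_f.
rewrite [in X in _ < X](slice_split leB) eB eF !map_cat /= (ownerP xF).
by apply: nswitch_replace_loop; rewrite // sw_mF.
Qed.

Lemma reroute : exists P, [/\ ipath t s P, {subset P <= B ++ F}
  & nswitch (map owner P) < nswitch (map owner B)].
Proof.
have [P [PP sub le]] := walk_to_path owner reroute_walk.
exists P; split => //; last exact: leq_ltn_trans le reroute_switches.
move=> e /sub; rewrite !mem_cat => /or3P[/mem_take|/mem_take/mem_drop|/mem_drop] ->.
all: by rewrite ?orbT.
Qed.

End Reroute.

Lemma exists_agreeing_path (H : pred EE) B : (forall i, {subset Fs i <= H}) ->
  ipath t s B -> {subset B <= H} ->
  exists B', [/\ ipath t s B', {subset B' <= H} & forall i, slices_agree (Fs i) B'].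
Proof.
move=> FH; have [n] := ubnP (nswitch (map owner B)).
elim: n B => // n IH B /ltnSE lt PB BH.
pose bad i x y := [&& x \in [predI Fs i & B], y \in [predI Fs i & B],
  index x (Fs i) <= index y (Fs i), index x B <= index y B & slice (Fs i) x y != slice B x y].
have [/existsP[i /existsP[x /existsP[y /and5P[/andP[xF xB] /andP[yF yB] leF leB ne]]]]|good] :=
  boolP [exists i, exists x, exists y, bad i x y].
  have [P [PP PBF ltP]] := reroute PB xF yF xB yB leF leB ne.
  apply: IH PP _ => [|e /PBF]; first exact: leq_trans ltP lt.
  by rewrite mem_cat => /orP[/BH|/FH].
exists B; split => // i x y xFB yFB leF leB; apply/eqP; apply: contraNT good => ne.
by apply/existsP; exists i; apply/existsP; exists x; apply/existsP; exists y; apply/and5P.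
Qed.

End Repair.

Section Optimum.
Variables (V E : finType) (tl hd : E -> V) (k : nat) (s t : V).
Local Notation EE := (E' E k).
Local Notation ipath := (@is_path V E tl hd k).
Local Notation feasible := (@feasible V E tl hd k s t).

Lemma path_size u v l : ipath u v l -> size l <= #|V|.
Proof.
case/andP => _ U; have := max_card (mem (u :: map (@hd' V E hd k) l)).
by rewrite (card_uniqP U) /= size_map => /ltnW.
Qed.

Definition feasibleb (Fs : 'I_k -> seq EE) B :=
  [&& [forall i, ipath s t (Fs i)],
      [forall i, forall j, (i != j) ==> [forall e, (e \in Fs i) ==> (e \notin Fs j)]]
    & ipath t s B].

Lemma feasibleP Fs B : reflect (feasible Fs B) (feasibleb Fs B).
Proof.
apply: (iffP and3P) => [[/forallP PF /forallP disF PB]|[PF disF PB]]; split => //.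
- by move=> i j ij e; move: (disF i) => /forallP/(_ j)/implyP/(_ ij)/forallP/(_ e)/implyP.
- exact/forallP.
apply/forallP => i; apply/forallP => j; apply/implyP => ij.
by apply/forallP => e; apply/implyP; apply: disF.
Qed.

Lemma exists_optimum (R : realDomainType) (w : E -> R) :
  (exists Fs B, feasible Fs B) -> exists Fs B, feasible Fs B /\
    forall Fs' B', feasible Fs' B' -> (cost w Fs B <= cost w Fs' B')%R.
Proof.
pose enc (Fs : 'I_k -> seq EE) (B : seq EE) :=
  ([ffun i => insub_bseq #|V| (Fs i)], insub_bseq #|V| B).
pose paths (c : {ffun 'I_k -> #|V|.-bseq EE} * #|V|.-bseq EE) i : seq EE := c.1 i.
have encK Fs B : feasible Fs B -> paths (enc Fs B) = Fs /\ (enc Fs B).2 = B :> seq EE.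
  case=> PF _ PB; rewrite /= insubdK; last exact: path_size PB.
  split => //; apply: functional_extensionality => i.
  by rewrite /paths ffunE insubdK //; apply: path_size (PF i).
case=> Fs0 [B0 f0]; pose P c := feasibleb (paths c) c.2.
have P0 : P (enc Fs0 B0) by have [e1 e2] := encK _ _ f0; apply/feasibleP; rewrite e1 e2.
case: (arg_minP (fun c => cost w (paths c) c.2) P0) => c /feasibleP fc cmin.
exists (paths c), c.2; split => // Fs B fFB.
have [eF eB] := encK _ _ fFB.
by have := cmin (enc Fs B); rewrite /P eF eB; apply; apply/feasibleP.
Qed.

End Optimum.

Local Open Scope ring_scope.

Lemma cost_subset (E : finType) (k : nat) (R : numDomainType) (w : E -> R)
    (Fs : 'I_k -> seq (E' E k)) (B B' : seq (E' E k)) :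
  (forall e, 0 <= w e) -> {subset B' <= [pred x | [exists i, x \in Fs i] || (x \in B)]} ->
  cost w Fs B' <= cost w Fs B.
Proof.
move=> hw sub; rewrite /cost [X in X <= _]big_mkcond [X in _ <= X]big_mkcond.
apply: ler_sum => x _; case: ifP => h1; case: ifP => h2 //.
by case/orP: h1 => [h|/sub]; [rewrite h in h2 | rewrite inE h2].
Qed.

Theorem lemma2 (V E : finType) (tl hd : E -> V) (R : realFieldType)
  (w : E -> R) (hw : forall e, 0 <= w e) (s t : V) (k : nat) (hk : (0 < k)%N)
  (hfeas : exists (Fs : 'I_k -> seq (E' E k)) (B : seq (E' E k)),
      feasible tl hd s t Fs B) :
  exists (Fs : 'I_k -> seq (E' E k)) (B : seq (E' E k)),
    [/\ feasible tl hd s t Fs B,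
        (forall (Fs' : 'I_k -> seq (E' E k)) (B' : seq (E' E k)),
            feasible tl hd s t Fs' B' -> cost w Fs B <= cost w Fs' B')
      & rev_compat Fs B].
Proof.
have [Fs [B [[PF disF PB] opt]]] := exists_optimum w hfeas.
pose H := [pred e | [exists i, e \in Fs i] || (e \in B)].
have FH i : {subset Fs i <= H}.
  by move=> e ei; rewrite inE; apply/orP; left; apply/existsP; exists i.
have BH : {subset B <= H} by move=> e eB; rewrite inE eB orbT.
have [B' [PB' B'H agree]] := exists_agreeing_path PF disF FH PB BH.
exists Fs, B'; split => [|Fs' B'' f'|i]; first by [].
  exact: le_trans (cost_subset hw B'H) (opt _ _ f').
exact: slices_path_rev_compat (PF i) PB' (agree i).
Qed.
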